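(* Consider online binary classification with abstention with $d$ experts and arbitrary abstention costs $c_t$, and run AdaHedge with abstention. Then for every expert $i\in\{1,\dots,d\}$, $$\sum_{t=1}^T\big((1-b_t)\ell_t(y_t^\star)+b_tc_t\big)\le\sum_{t=1}^T\ell_t(y_t^i)+\inf_{\eta>0}\Big\{\frac{\ln d}{\eta}+\sum_{t=1}^T\big((1-b_t)\ell_t(y_t^\star)+c_tb_t+\eta v_t-\ell_t(\hat y_t)\big)\Big\}+\frac43\ln d+2,$$ where $v_t=\mathbb E_{i\sim\hat{\mathbf p}_t}\big[(\ell_t(\hat y_t)-\ell_t(y_t^i))^2\big]$.
   Context: Online classification with abstention: in each round $t=1,\dots,T$, the learner observes expert predictions $y_t^1,\dots,y_t^d\in[-1,1]$, predicts $y'_t\in[-1,1]\cup\{*\}$ ($*$ = abstain), the environment reveals $y_t\in\{-1,1\}$ and an abstention cost $c_t$, and the learner suffers $\ell_t(y'_t)=\frac12(1-y_ty'_t)$ if $y'_t\in[-1,1]$ and $c_t$ if $y'_t=*$. For expert $i$ its loss is $\ell_t(y_t^i)=\frac12(1-y_ty_t^i)\in[0,1]$. AdaHedge: with $L_{t,i}=\sum_{s<t}\ell_s(y_s^i)$, weights $\hat p_{t,i}\propto\exp(-\eta_tL_{t,i})$, where $\eta_t=\ln d/\Delta_{t-1}$ (and for $\Delta_{t-1}=0$ the weights are uniform over the experts minimizing $L_{t,i}$), $\Delta_t=\sum_{s\le t}\delta_s$, $\delta_s=h_s-m_s$, $h_s=\sum_i\hat p_{s,i}\ell_s(y_s^i)$,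 $m_s=-\frac1{\eta_s}\ln\sum_i\hat p_{s,i}e^{-\eta_s\ell_s(y_s^i)}$ (with $m_s=\min_{i:\hat p_{s,i}>0}\ell_s(y_s^i)$ when $\eta_s=\infty$). AdaHedge with abstention (Algorithm 2): in round $t$ obtain $\hat{\mathbf p}_t$ from AdaHedge, set $\hat y_t=\sum_i\hat p_{t,i}y_t^i$, $y_t^\star=\mathrm{sign}(\hat y_t)$, $b_t=1-|\hat y_t|$; predict $y'_t=y_t^\star$ with probability $1-b_t$ and abstain with probability $b_t$; then feed the expert losses $\ell_t(y_t^i)$ to AdaHedge. The quantity $(1-b_t)\ell_t(y_t^\star)+b_tc_t$ is the learner's expected loss in round $t$. *)

From HB Require Import structures.
From mathcomp Require Import all_boot all_order all_algebra.
From mathcomp Require Import all_classical all_reals all_analysis.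
Set Implicit Arguments. Unset Strict Implicit. Unset Printing Implicit Defensive.
Import Order.TTheory GRing.Theory Num.Theory.
Local Open Scope ring_scope.
Local Open Scope classical_set_scope.

Section AdaHedgeAbst.
Variables (R : realType) (d : nat).
(* Rounds are indexed 0,1,...,T-1 (round t here = round t+1 of the paper).
   ye t i : prediction of expert i in round t;  y t : label of round t. *)
Variables (ye : nat -> 'I_d -> R) (y : nat -> R).

Definition loss (t : nat) (z : R) : R := (1 - y t * z) / 2.

Definition cumL (t : nat) (i : 'I_d) : R := \sum_(s < t) loss s (ye s i).

(* AdaHedge weights in round t, given Delta_{t-1} = Dt.
   If Dt = 0 (eta = +oo): uniform over the minimizers of L_t;
   otherwise: proportional to exp(-eta L_{t,i}) with eta = ln d / Dt. *)
Definition eta_of (Dt : R) : R := ln d%:R / Dt.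

Definition is_leader (t : nat) (i : 'I_d) : bool := [forall j, cumL t i <= cumL t j].

Definition weights (Dt : R) (t : nat) (i : 'I_d) : R :=
  if Dt == 0 then
    (if is_leader t i then (#|[pred j | is_leader t j]|%:R)^-1 else 0)
  else
    expR (- eta_of Dt * cumL t i) / \sum_(j < d) expR (- eta_of Dt * cumL t j).

Definition hmix (Dt : R) (t : nat) : R := \sum_(i < d) weights Dt t i * loss t (ye t i).

(* For eta = +oo, m_t = min over the support of the weights of the expert
   losses; losses lie in [0,1], so 1 is a neutral default for this min. *)
Definition mmix (Dt : R) (t : nat) : R :=
  if Dt == 0 then
    \big[Num.min/1]_(i < d | 0 < weights Dt t i) loss t (ye t i)
  else
    - (eta_of Dt)^-1 *
      ln (\sum_(i < d) weights Dt t i * expR (- eta_of Dt * loss t (ye t i))).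

Definition delta (Dt : R) (t : nat) : R := hmix Dt t - mmix Dt t.

Fixpoint Dcum (t : nat) : R :=
  match t with
  | 0 => 0
  | t'.+1 => Dcum t' + delta (Dcum t') t'
  end.

Definition phat (t : nat) (i : 'I_d) : R := weights (Dcum t) t i.

Definition yhat (t : nat) : R := \sum_(i < d) phat t i * ye t i.
Definition ystar (t : nat) : R := Num.sg (yhat t).
Definition babst (t : nat) : R := 1 - `|yhat t|.

Definition vvar (t : nat) : R :=
  \sum_(i < d) phat t i * (loss t (yhat t) - loss t (ye t i)) ^+ 2.

End AdaHedgeAbst.

(* Write h_t, m_t, delta_t = h_t - m_t for the mix loss, the mixability bound
   and the mixability gap of AdaHedge in round t, Delta_t = sum_{s<t} delta_s,
   H_t = sum_{s<t} h_s and V_t = sum_{s<t} v_s.  Since the loss is affine, the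
   loss of the averaged prediction yhat_t equals h_t, so the learner's expected
   loss cancels from both sides of the theorem and it suffices to show
     H_T <= L_{T,i} + ln d / eta + eta V_T + 4/3 ln d + 2   for all eta > 0.
   The file establishes in turn:
   - elementary bounds on exp (Taylor, Bernstein-type, weighted AM-GM);
   - for one round of exponential weights: 0 <= h - m <= 1 and the Bernstein
     bound h - m <= eta v / 2 + eta (h - m) / 3;
   - for the potential Phi_eta(L) = - ln (sum_j e^{- eta L_j}) / eta: bounds
     by min_j L_j and monotonicity of Phi_eta(L) + ln d / eta in eta;
   - two invariants of AdaHedge, proved by induction on t:
     H_t <= Phi_{eta_t}(L_t) + 2 Delta_t (hence H_T <= L_{T,i} + 2 Delta_T) and
     Delta_t^2 <= ln d V_t + (2/3 ln d + 1) Delta_t;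
   - solving the quadratic inequality for Delta_T by AM-GM gives the bound. *)
From Pilot Require Import Defs.
From HB Require Import structures.
From mathcomp Require Import all_boot all_order all_algebra.
From mathcomp Require Import all_classical all_reals all_analysis.
From mathcomp Require Import ring lra.
Import Order.TTheory GRing.Theory Num.Theory.
Import numFieldNormedType.Exports.
Set Implicit Arguments. Unset Strict Implicit. Unset Printing Implicit Defensive.
Local Open Scope ring_scope.
Local Open Scope classical_set_scope.

Section ExpBounds.
Variable R : realType.

Lemma nondecreasing_from (f df : R -> R) (a : R) :
  (forall x, is_derive x (1 : R) f (df x)) -> (forall x, a < x -> 0 <= df x) ->
  forall x, a <= x -> f a <= f x.
Proof.
move=> f_df df_ge0 x ax; apply: (@ger0_derive1_ndecry R f a) => //.
- move=> z; rewrite in_itv/= andbT => az.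
  by rewrite derive1E (@derive_val _ _ _ _ _ _ _ (f_df z)); exact: df_ge0.
- have f_cont : continuous f.
    by move=> z; apply/differentiable_continuous/derivable1_diffP; case: (f_df z).
  exact: continuous_subspaceT.
Qed.

Lemma expR_le_taylor2 (u : R) : u <= 0 -> expR u <= 1 + u + u * u / 2.
Proof.
move=> u_le0.
(* w |-> e^w (1 - w + w^2/2) has derivative e^w w^2/2 >= 0 and value 1 at 0 *)
have taylor (w : R) : 0 <= w -> 1 <= expR w * (1 - w + w * w / 2).
  move=> w_ge0.
  have := @nondecreasing_from (fun w => expR w * (1 - w + w * w / 2))
            (fun w => expR w * (w * w / 2)) 0.
  rewrite /= expR0 mul0r subr0 mul0r addr0 mul1r; apply => // x.
    by apply: is_derive_eq; rewrite /GRing.scale /=; field.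
  by move=> _; have := expR_ge0 x; nra.
have /taylor : 0 <= - u by lra.
have := expRxMexpNx_1 u; have := expR_gt0 u; have := expR_gt0 (- u); nra.
Qed.

(* The bound e^u (1 - u/3) <= 1 + 2u/3 + u^2/6 for u >= 0: the difference
   f(u) of both sides vanishes at 0 together with f', and
   f''(u) = 1/3 - (1/3 - u/3) e^u >= 0 because e^{-u} >= 1 - u. *)
Lemma expR_pade (u : R) : 0 <= u -> expR u * (1 - u / 3) <= 1 + 2 * u / 3 + u * u / 6.
Proof.
move=> u_ge0.
have f2_ge0 (x : R) : 0 <= 1/3 - (1/3 - x/3) * expR x.
  have := expR_ge1Dx (- x); have := expRxMexpNx_1 x; have := expR_gt0 x; nra.
have f1_ge0 (x : R) : 0 <= x -> 0 <= 2/3 + x/3 - (2/3 - x/3) * expR x.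
  move=> x_ge0.
  have := @nondecreasing_from (fun u => 2/3 + u/3 - (2/3 - u/3) * expR u)
            (fun u => 1/3 - (1/3 - u/3) * expR u) 0.
  rewrite /= expR0 mul0r subr0 mulr1 addr0 subrr.
  apply; [ by move=> z; apply: is_derive_eq; rewrite /GRing.scale /=; field
         | by move=> z _; exact: f2_ge0 | exact: x_ge0 ].
have mono := @nondecreasing_from (fun u => 1 + 2 * u / 3 + u * u / 6 - (1 - u/3) * expR u)
                (fun u => 2/3 + u/3 - (2/3 - u/3) * expR u) 0.
suff : 0 <= 1 + 2 * u / 3 + u * u / 6 - (1 - u / 3) * expR u by lra.
have -> : 0 = 1 + 2 * 0 / 3 + 0 * 0 / 6 - (1 - 0 / 3) * expR (0 : R).
  by rewrite expR0; field.
apply: mono => //.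
- by move=> z; apply: is_derive_eq; rewrite /GRing.scale /=; field.
- by move=> z /ltW; exact: f1_ge0.
Qed.

Lemma expR_bernstein (eta u : R) : 0 < eta < 3 -> u <= eta ->
  expR u <= 1 + u + u * u * (3 / (2 * (3 - eta))).
Proof.
move=> /andP[eta_gt0 eta_lt3] u_le.
set c := 3 / (2 * (3 - eta)).
have c_ge : 1/2 <= c by rewrite ler_pdivlMr ?mulr_gt0 ?subr_gt0 //; lra.
have c_eta : c * (3 - eta) = 3/2.
  by rewrite /c; field; rewrite subr_eq0; apply/eqP => e3; move: eta_lt3; rewrite e3 ltxx.
have uu : 0 <= u * u by rewrite -expr2 sqr_ge0.
case: (lerP u 0) => [u_le0|u_gt0]; first by have := expR_le_taylor2 u_le0; nra.
have pade := expR_pade (ltW u_gt0); have eu := expR_gt0 u.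
have h3 : 0 < 3 - u by lra.
rewrite -(ler_pM2r h3); have : c * (3 - u) >= 3/2 by nra.
nra.
Qed.

Lemma expR_conv (r z : R) : 0 <= r -> r <= 1 -> expR (r * z) <= 1 - r + r * expR z.
Proof.
move=> r_ge0 r_le1; have := @convex_expR R (Itv01 r_ge0 r_le1) z 0.
by rewrite !convRE /= expR0 mulr0 addr0 mulr1 addrC.
Qed.

End ExpBounds.

Section MixLoss.
Variables (R : realType) (d : nat) (p l : 'I_d -> R) (eta : R).
Hypotheses (eta_gt0 : 0 < eta) (p_ge0 : forall i, 0 <= p i) (p_sum1 : \sum_i p i = 1).
Hypothesis l01 : forall i, 0 <= l i <= 1.

Definition mix_mean : R := \sum_i p i * l i.
Definition mix_loss : R := - eta^-1 * ln (\sum_i p i * expR (- eta * l i)).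
Definition mix_var : R := \sum_i p i * (mix_mean - l i) ^+ 2.

Lemma jensen_expR (x : 'I_d -> R) : expR (\sum_i p i * x i) <= \sum_i p i * expR (x i).
Proof.
set mu := \sum_i p i * x i.
(* tangent line of exp at mu *)
have tangent i : p i * (expR mu * (1 + (x i - mu))) <= p i * expR (x i).
  apply: ler_wpM2l => //.
  have -> : expR (x i) = expR mu * expR (x i - mu) by rewrite -expRD addrC subrK.
  have := expR_ge1Dx (x i - mu); have := expR_gt0 mu; nra.
apply: le_trans (ler_sum _ (fun i _ => tangent i)).
rewrite (eq_bigr (fun i => expR mu * p i + expR mu * (p i * x i) - expR mu * mu * p i));
  last by move=> i _; ring.
by rewrite sumrB big_split /= -!mulr_sumr p_sum1 -/mu; lra.
Qed.

Lemma mix_sum_gt0 (x : 'I_d -> R) : 0 < \sum_i p i * expR (x i).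
Proof. exact: lt_le_trans (expR_gt0 _) (jensen_expR x). Qed.

Lemma mix_mean_le1 : mix_mean <= 1.
Proof.
rewrite -p_sum1; apply: ler_sum => i _.
by apply: ler_piMr => //; case/andP: (l01 i).
Qed.

Lemma mix_var_ge0 : 0 <= mix_var.
Proof. by apply: sumr_ge0 => i _; rewrite mulr_ge0 ?sqr_ge0. Qed.

Lemma mix_centered : \sum_i p i * (mix_mean - l i) = 0.
Proof.
rewrite (eq_bigr (fun i => mix_mean * p i - p i * l i)); last by move=> i _; ring.
by rewrite sumrB -mulr_sumr p_sum1 mulr1 subrr.
Qed.

(* The scaled gap is the log of a moment generating function of the centred
   losses; all bounds on the gap are read off this identity. *)
Lemma mix_gap_scaled :
  eta * (mix_mean - mix_loss) = ln (\sum_i p i * expR (eta * (mix_mean - l i))).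
Proof.
set S := \sum_i p i * expR (- eta * l i).
have S_gt0 : 0 < S := mix_sum_gt0 _.
have -> : \sum_i p i * expR (eta * (mix_mean - l i)) = expR (eta * mix_mean) * S.
  rewrite /S mulr_sumr; apply: eq_bigr => i _.
  by rewrite mulrCA -expRD; congr (_ * expR _); ring.
rewrite lnM ?posrE ?expR_gt0 // expRK /mix_loss -/S.
by field; rewrite gt_eqF.
Qed.

Lemma mix_gap_ge0 : 0 <= mix_mean - mix_loss.
Proof.
rewrite -(pmulr_rge0 _ eta_gt0) mix_gap_scaled; apply: ln_ge0.
apply: le_trans (jensen_expR (fun i => eta * (mix_mean - l i))).
rewrite (eq_bigr (fun i => eta * (p i * (mix_mean - l i)))); last by move=> i _; ring.
by rewrite -mulr_sumr mix_centered mulr0 expR0.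
Qed.

(* The gap is at most the mean loss, since every loss is nonnegative. *)
Lemma mix_gap_le1 : mix_mean - mix_loss <= 1.
Proof.
apply: le_trans mix_mean_le1.
rewrite -(ler_pM2l eta_gt0) mix_gap_scaled -[leRHS]expRK.
rewrite ler_ln ?posrE ?expR_gt0 ?mix_sum_gt0 //.
rewrite -[leRHS]mulr1 -p_sum1 mulr_sumr; apply: ler_sum => i _.
rewrite [leRHS]mulrC ler_wpM2l // ler_expR ler_pM2l //.
by rewrite lerBlDr lerDl; case/andP: (l01 i).
Qed.

Lemma mix_gap_bernstein :
  mix_mean - mix_loss <= eta * mix_var / 2 + eta * (mix_mean - mix_loss) / 3.
Proof.
have g_ge0 := mix_gap_ge0; have v_ge0 := mix_var_ge0.
case: (lerP 3 eta) => [eta_ge3|eta_lt3].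
  have : 0 <= eta * mix_var / 2 by rewrite divr_ge0 // mulr_ge0 // ltW.
  nra.
set g := mix_mean - mix_loss in g_ge0 *.
set c := 3 / (2 * (3 - eta)).
have c_eta : c * (3 - eta) = 3/2.
  by rewrite /c; field; rewrite subr_eq0; apply/eqP => e3; move: eta_lt3; rewrite e3 ltxx.
have x_ge0 : 0 <= c * eta ^+ 2 * mix_var.
  by rewrite mulr_ge0 // mulr_ge0 ?sqr_ge0 // divr_ge0 // mulr_ge0 // subr_ge0 ltW.
have term i : p i * expR (eta * (mix_mean - l i)) <=
    p i * (1 + eta * (mix_mean - l i) + eta * (mix_mean - l i) * (eta * (mix_mean - l i)) * c).
  apply: ler_wpM2l => //; apply: expR_bernstein; first by rewrite eta_gt0.
  rewrite -[leRHS]mulr1 ler_pM2l // lerBlDr (le_trans mix_mean_le1) // lerDl.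
  by case/andP: (l01 i).
have mgf : \sum_i p i * expR (eta * (mix_mean - l i)) <= 1 + c * eta ^+ 2 * mix_var.
  apply: le_trans (ler_sum _ (fun i _ => term i)) _.
  rewrite (eq_bigr (fun i => p i + eta * (p i * (mix_mean - l i))
                             + c * eta ^+ 2 * (p i * (mix_mean - l i) ^+ 2)));
    last by move=> i _; rewrite /c; ring.
  by rewrite !big_split /= -!mulr_sumr p_sum1 mix_centered mulr0 addr0.
have g_le : g <= c * eta * mix_var.
  rewrite -(ler_pM2l eta_gt0) /g mix_gap_scaled.
  have -> : eta * (c * eta * mix_var) = c * eta ^+ 2 * mix_var by ring.
  apply: le_trans (le_ln1Dx _); last lra.
  by rewrite ler_ln ?posrE ?mix_sum_gt0 //; lra.
have eta_le3 : 0 <= 3 - eta by lra.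
have := ler_wpM2r eta_le3 g_le.
have -> : c * eta * mix_var * (3 - eta) = 3/2 * eta * mix_var by rewrite -c_eta; ring.
lra.
Qed.

End MixLoss.

Section Potential.
Variables (R : realType) (d : nat).

Definition potential (eta : R) (L : 'I_d -> R) : R :=
  - eta^-1 * ln (\sum_j expR (- eta * L j)).

Lemma sum_expR_gt0 (x : 'I_d -> R) : (0 < d)%N -> 0 < \sum_j expR (x j).
Proof.
move=> d_gt0; rewrite (bigD1 (Ordinal d_gt0)) //=.
by apply: ltr_pwDl; [exact: expR_gt0 | apply: sumr_ge0 => j _; exact: expR_ge0].
Qed.

Lemma potential_le (eta : R) (L : 'I_d -> R) (i : 'I_d) : 0 < eta -> potential eta L <= L i.
Proof.
move=> eta_gt0; have d_gt0 : (0 < d)%N := leq_ltn_trans (leq0n _) (ltn_ord i).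
rewrite /potential mulNr lerNl -(ler_pM2l eta_gt0) mulrA mulfV ?gt_eqF // mul1r.
rewrite mulrN -mulNr -[leLHS]expRK ler_ln ?posrE ?expR_gt0 ?sum_expR_gt0 //.
by rewrite (bigD1 i) //= lerDl; apply: sumr_ge0 => j _; exact: expR_ge0.
Qed.

Lemma potential_ge (eta c : R) (L : 'I_d -> R) : (0 < d)%N -> 0 < eta ->
  (forall j, c <= L j) -> c - eta^-1 * ln d%:R <= potential eta L.
Proof.
move=> d_gt0 eta_gt0 c_le.
have sum_le : \sum_j expR (- eta * L j) <= d%:R * expR (- eta * c).
  have : \sum_j expR (- eta * L j) <= \sum_(j < d) expR (- eta * c).
    by apply: ler_sum => j _; rewrite ler_expR !mulNr lerN2 ler_pM2l.
  by rewrite sumr_const card_ord mulr_natl.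
have lnS_le : ln (\sum_j expR (- eta * L j)) <= ln d%:R - eta * c.
  have -> : ln d%:R - eta * c = ln (d%:R * expR (- eta * c)).
    by rewrite lnM ?posrE ?expR_gt0 ?ltr0n // expRK mulNr.
  by rewrite ler_ln ?posrE ?sum_expR_gt0 ?mulr_gt0 ?expR_gt0 ?ltr0n.
have ei_gt0 : 0 < eta^-1 by rewrite invr_gt0.
have ei : eta^-1 * (eta * c) = c by rewrite mulrA mulVf ?mul1r // gt_eqF.
have := ler_wpM2l (ltW ei_gt0) lnS_le; rewrite /potential; lra.
Qed.

Lemma sum_expR_scale (r : R) (z : 'I_d -> R) : (0 < d)%N -> 0 <= r -> r <= 1 ->
  \sum_j expR (r * z j) <= d%:R * expR (r * (ln (\sum_j expR (z j)) - ln d%:R)).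
Proof.
move=> d_gt0 r_ge0 r_le1.
set W := \sum_j expR (z j); set M := ln W - ln d%:R.
have W_gt0 : 0 < W := sum_expR_gt0 z d_gt0.
have dR_gt0 : 0 < d%:R :> R by rewrite ltr0n.
have term j : expR (r * z j) <= expR (r * M) * (1 - r + r * (expR (z j) * d%:R / W)).
  have -> : expR (r * z j) = expR (r * M) * expR (r * (z j - M)).
    by rewrite -expRD; congr expR; ring.
  rewrite ler_pM2l ?expR_gt0 //.
  have -> : expR (z j) * d%:R / W = expR (z j - M).
    by rewrite expRB /M expRB !lnK ?posrE //; field; rewrite ?gt_eqF.
  exact: expR_conv.
apply: le_trans (ler_sum _ (fun j _ => term j)) _; rewrite -mulr_sumr.
have -> : \sum_j (1 - r + r * (expR (z j) * d%:R / W)) = d%:R.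
  rewrite (eq_bigr (fun j => (1 - r) + (r * d%:R / W) * expR (z j))); last first.
    by move=> j _; field; rewrite gt_eqF.
  rewrite big_split /= -mulr_sumr -/W sumr_const card_ord -mulr_natr.
  by field; rewrite gt_eqF.
by rewrite mulrC.
Qed.

Lemma potential_shift_mono (a b : R) (L : 'I_d -> R) : (0 < d)%N -> 0 < a -> a <= b ->
  potential b L + b^-1 * ln d%:R <= potential a L + a^-1 * ln d%:R.
Proof.
move=> d_gt0 a_gt0 ab; have b_gt0 : 0 < b := lt_le_trans a_gt0 ab.
set r := a / b; set Wa := \sum_j expR (- a * L j); set Wb := \sum_j expR (- b * L j).
have r_ge0 : 0 <= r by rewrite divr_ge0 // ltW.
have r_le1 : r <= 1 by rewrite ler_pdivrMr // mul1r.
have scale : Wa <= d%:R * expR (r * (ln Wb - ln d%:R)).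
  have -> : Wa = \sum_j expR (r * (- b * L j)).
    by apply: eq_bigr => j _; congr expR; rewrite /r; field; rewrite gt_eqF.
  exact: sum_expR_scale.
have ln_le : ln Wa <= ln d%:R + r * (ln Wb - ln d%:R).
  rewrite -[X in _ <= _ + X]expRK -lnM ?posrE ?expR_gt0 ?ltr0n //.
  by rewrite ler_ln ?posrE ?sum_expR_gt0 ?mulr_gt0 ?expR_gt0 ?ltr0n.
have ai_gt0 : 0 < a^-1 by rewrite invr_gt0.
have := ler_wpM2l (ltW ai_gt0) ln_le.
have -> : a^-1 * (ln d%:R + r * (ln Wb - ln d%:R)) = a^-1 * ln d%:R + b^-1 * (ln Wb - ln d%:R).
  by rewrite /r; field; rewrite !gt_eqF.
rewrite /potential -/Wa -/Wb; lra.
Qed.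

End Potential.

(* Choosing the learning rate: if Dl^2 <= a V + B Dl, then for every eta > 0,
   2 Dl - 2 B <= a / eta + eta V, because a / eta + eta V >= 2 sqrt(a V). *)
Lemma tuned_root_bound (R : realType) (Dl a V B eta : R) :
  0 <= Dl -> 0 <= a -> 0 <= V -> 0 <= B -> 0 < eta ->
  Dl ^+ 2 <= a * V + B * Dl -> 2 * Dl - 2 * B <= a / eta + eta * V.
Proof.
move=> Dl_ge0 a_ge0 V_ge0 B_ge0 eta_gt0 quad.
set x := a / eta.
have x_eta : x * eta = a by rewrite /x mulfVK // gt_eqF.
have x_ge0 : 0 <= x by rewrite /x divr_ge0 // ltW.
have S_ge0 : 0 <= x + eta * V by rewrite addr_ge0 // mulr_ge0 // ltW.
case: (lerP Dl B) => [Dl_le|B_lt]; first lra.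
have sq_le : (Dl - B) ^+ 2 <= x * eta * V by rewrite x_eta; nra.
have amgm : 4 * (x * eta * V) <= (x + eta * V) ^+ 2.
  have : 0 <= (x - eta * V) ^+ 2 by rewrite sqr_ge0.
  nra.
have lhs_ge0 : 0 <= 2 * Dl - 2 * B by lra.
have : (2 * Dl - 2 * B) ^+ 2 <= (x + eta * V) ^+ 2 by nra.
by rewrite ler_sqr ?nnegrE.
Qed.

Section AdaHedge.
Variables (R : realType) (d : nat) (ye : nat -> 'I_d -> R) (y : nat -> R).
Hypothesis d_gt0 : (0 < d)%N.

Local Notation cumL := (cumL ye y).
Local Notation Dcum := (Dcum ye y).
Local Notation lo t i := (loss y t (ye t i)).

Definition Hcum (t : nat) : R := \sum_(s < t) hmix ye y (Dcum s) s.
Definition Vcum (t : nat) : R := \sum_(s < t) vvar ye y s.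

Lemma cumL_succ t i : cumL t.+1 i = cumL t i + lo t i.
Proof. by rewrite /Defs.cumL big_ord_recr. Qed.

Lemma Dcum_succ t : Dcum t.+1 = Dcum t + delta ye y (Dcum t) t.
Proof. by []. Qed.

Lemma Hcum_succ t : Hcum t.+1 = Hcum t + hmix ye y (Dcum t) t.
Proof. by rewrite /Hcum big_ord_recr. Qed.

Lemma Vcum_succ t : Vcum t.+1 = Vcum t + vvar ye y t.
Proof. by rewrite /Vcum big_ord_recr. Qed.

Lemma loss_in01 t i : -1 <= ye t i <= 1 -> (y t = 1 \/ y t = -1) -> 0 <= lo t i <= 1.
Proof. by move=> /andP[ye_lo ye_hi]; rewrite /loss; case=> ->; apply/andP; split; lra. Qed.

Lemma sum_uniform : \sum_(j < d) d%:R^-1 = 1 :> R.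
Proof. by rewrite sumr_const card_ord -[_ *+ d]mulr_natr mulVf // pnatr_eq0 -lt0n. Qed.

Lemma weights_exp Dt t i : Dt != 0 ->
  weights ye y Dt t i
  = expR (- eta_of d Dt * cumL t i) / \sum_j expR (- eta_of d Dt * cumL t j).
Proof. by move=> Dt_neq0; rewrite /weights (negbTE Dt_neq0). Qed.

Lemma weights_tied t i : (forall j k, cumL t j = cumL t k) -> weights ye y 0 t i = d%:R^-1.
Proof.
move=> tied; rewrite /weights eqxx.
have leader k : is_leader ye y t k by apply/forallP => j; rewrite (tied k j).
rewrite leader; congr (_ ^-1); congr (_ %:R).
by rewrite -[RHS]card_ord; apply: eq_card => k; rewrite !inE leader.
Qed.

Lemma weights_ge0 Dt t i : 0 <= weights ye y Dt t i.
Proof.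
rewrite /weights; case: (Dt == 0).
  by case: (is_leader _ _ _ _); rewrite ?invr_ge0 ?ler0n.
by rewrite divr_ge0 ?expR_ge0 // sumr_ge0 // => j _; rewrite expR_ge0.
Qed.

Lemma weights_sum1 Dt t : Dt != 0 -> \sum_i weights ye y Dt t i = 1.
Proof.
move=> Dt_neq0; rewrite (eq_bigr _ (fun i _ => weights_exp t i Dt_neq0)) -mulr_suml.
by rewrite mulfV // gt_eqF // sum_expR_gt0.
Qed.

Lemma vvar_ge0 t : 0 <= vvar ye y t.
Proof. by rewrite /vvar sumr_ge0 // => i _; rewrite mulr_ge0 ?weights_ge0 ?sqr_ge0. Qed.

Lemma Vcum_ge0 t : 0 <= Vcum t.
Proof. by rewrite /Vcum sumr_ge0 // => s _; exact: vvar_ge0. Qed.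

(* The loss is affine, so the loss of the averaged prediction is the mean loss. *)
Lemma loss_yhat t : \sum_i phat ye y t i = 1 -> loss y t (yhat ye y t) = hmix ye y (Dcum t) t.
Proof.
rewrite /loss /yhat /hmix /Defs.phat => p_sum1.
rewrite [in RHS](eq_bigr (fun i => weights ye y (Dcum t) t i / 2
                                   - y t / 2 * (weights ye y (Dcum t) t i * ye t i)));
  last by move=> i _; rewrite /loss; ring.
by rewrite sumrB -mulr_suml -mulr_sumr p_sum1; ring.
Qed.

Section TiedRound.
Variable t : nat.
Hypothesis tied : forall j k, cumL t j = cumL t k.
Hypothesis l01 : forall j, 0 <= lo t j <= 1.

Lemma mmix0_le j : mmix ye y 0 t <= lo t j.
Proof.
rewrite /mmix eqxx (bigD1 j) /=; first by rewrite ge_min lexx.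
by rewrite weights_tied // invr_gt0 ltr0n.
Qed.

Lemma mmix0_ge (x : R) : x <= 1 -> (forall j, x <= lo t j) -> x <= mmix ye y 0 t.
Proof.
move=> x_le1 x_le; rewrite /mmix eqxx.
by elim/big_rec: _ => // j r _ IH; rewrite le_min x_le IH.
Qed.

Lemma delta0E : delta ye y 0 t = \sum_j d%:R^-1 * (lo t j - mmix ye y 0 t).
Proof.
rewrite (eq_bigr (fun j => d%:R^-1 * lo t j - mmix ye y 0 t * d%:R^-1));
  last by move=> j _; ring.
rewrite sumrB -[X in _ - X]mulr_sumr sum_uniform mulr1 /delta /hmix.
by congr (_ - _); apply: eq_bigr => j _; rewrite weights_tied.
Qed.

Lemma delta0_ge0 : 0 <= delta ye y 0 t.
Proof.
rewrite delta0E; apply: sumr_ge0 => j _.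
by rewrite mulr_ge0 ?invr_ge0 ?ler0n // subr_ge0 mmix0_le.
Qed.

Lemma delta0_le1 : delta ye y 0 t <= 1.
Proof.
have m_ge0 : 0 <= mmix ye y 0 t by apply: mmix0_ge => // j; case/andP: (l01 j).
rewrite delta0E -[leRHS]sum_uniform; apply: ler_sum => j _.
apply: ler_piMr; first by rewrite invr_ge0 ler0n.
by rewrite lerBlDr; case/andP: (l01 j) => _ /le_trans; apply; rewrite lerDl.
Qed.

Lemma delta0_eq0 : delta ye y 0 t = 0 -> forall j, lo t j = mmix ye y 0 t.
Proof.
rewrite delta0E => /eqP; rewrite psumr_eq0 => [/allP all0 j|j _]; last first.
  by rewrite mulr_ge0 ?invr_ge0 ?ler0n // subr_ge0 mmix0_le.
have := all0 j (mem_index_enum _); rewrite /= mulf_eq0 invr_eq0 pnatr_eq0 gtn_eqF //=.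
by rewrite subr_eq0 => /eqP.
Qed.

Lemma delta0_single : d = 1%N -> delta ye y 0 t = 0.
Proof.
move=> d1; have j0 : 'I_d := Ordinal d_gt0.
have single (j : 'I_d) : j = j0.
  case: j j0 => [n n_lt] [m m_lt]; apply/val_inj => /=.
  by move: n_lt m_lt; rewrite d1 !ltnS !leqn0 => /eqP -> /eqP ->.
have m_eq : mmix ye y 0 t = lo t j0.
  apply/le_anti/andP; split; first exact: mmix0_le.
  by apply: mmix0_ge => [|j]; [case/andP: (l01 j0) | rewrite (single j)].
by rewrite delta0E big1 // => j _; rewrite (single j) m_eq subrr mulr0.
Qed.

End TiedRound.

Lemma eta_of_gt0 (X : R) : (1 < d)%N -> 0 < X -> 0 < eta_of d X.
Proof. by move=> d_gt1 X_gt0; rewrite /eta_of divr_gt0 // ln_gt0 // ltr1n. Qed.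

Lemma eta_of_invK (X : R) : (1 < d)%N -> 0 < X -> (eta_of d X)^-1 * ln d%:R = X.
Proof.
move=> d_gt1 X_gt0; have lnd_gt0 : 0 < ln (d%:R : R) by rewrite ln_gt0 // ltr1n.
by rewrite /eta_of invf_div mulfVK // gt_eqF.
Qed.

Lemma eta_of_mulK (X : R) : 0 < X -> eta_of d X * X = ln d%:R.
Proof. by move=> X_gt0; rewrite /eta_of mulfVK // gt_eqF. Qed.

Lemma delta_pos_bounds t : (1 < d)%N -> 0 < Dcum t -> (forall j, 0 <= lo t j <= 1) ->
  [/\ 0 <= delta ye y (Dcum t) t, delta ye y (Dcum t) t <= 1
    & delta ye y (Dcum t) t <= eta_of d (Dcum t) * vvar ye y t / 2
                               + eta_of d (Dcum t) * delta ye y (Dcum t) t / 3].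
Proof.
move=> d_gt1 D_gt0 l01; have D_neq0 : Dcum t != 0 by rewrite gt_eqF.
have eta_gt0 := eta_of_gt0 d_gt1 D_gt0.
have p_ge0 := weights_ge0 (Dcum t) t.
have p_sum1 := weights_sum1 t D_neq0.
have -> : delta ye y (Dcum t) t = mix_mean (weights ye y (Dcum t) t) (fun i => lo t i)
           - mix_loss (weights ye y (Dcum t) t) (fun i => lo t i) (eta_of d (Dcum t)).
  by rewrite /delta /mmix (negbTE D_neq0).
have -> : vvar ye y t = mix_var (weights ye y (Dcum t) t) (fun i => lo t i).
  by rewrite /vvar loss_yhat.
by split; [apply: mix_gap_ge0 | apply: mix_gap_le1 | apply: mix_gap_bernstein].
Qed.

Lemma mmix_telescope Dt t : Dt != 0 ->
  mmix ye y Dt t = potential (eta_of d Dt) (cumL t.+1) - potential (eta_of d Dt) (cumL t).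
Proof.
move=> Dt_neq0; set eta := eta_of d Dt.
rewrite /mmix (negbTE Dt_neq0) /potential -/eta -mulrBr; congr (_ * _).
rewrite -ln_div ?posrE ?sum_expR_gt0 //; congr ln.
rewrite (eq_bigr (fun i => expR (- eta * cumL t.+1 i) / \sum_j expR (- eta * cumL t j))).
  by rewrite -mulr_suml.
by move=> i _; rewrite weights_exp // -/eta mulrAC -expRD cumL_succ; congr (expR _ / _); ring.
Qed.

Definition regret_inv (t : nat) : Prop :=
  (Dcum t = 0 /\ forall j, cumL t j = Hcum t) \/
  [/\ 0 < Dcum t, (1 < d)%N
    & Hcum t <= potential (eta_of d (Dcum t)) (cumL t) + 2 * Dcum t].

Definition gap_inv (t : nat) : Prop :=
  Dcum t ^+ 2 <= ln d%:R * Vcum t + (2/3 * ln d%:R + 1) * Dcum t.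

(* Leaving a tie: m_t is a lower bound on every loss of the round, which
   bounds the new potential from below. *)
Lemma regret_inv_succ_tied t : (forall j, 0 <= lo t j <= 1) ->
  Dcum t = 0 -> (forall j, cumL t j = Hcum t) -> regret_inv t.+1.
Proof.
move=> l01 D0 tied_H.
have tied j k : cumL t j = cumL t k by rewrite !tied_H.
have DS : Dcum t.+1 = delta ye y 0 t by rewrite Dcum_succ D0 add0r.
have HS : Hcum t.+1 = Hcum t + mmix ye y 0 t + delta ye y 0 t.
  by rewrite Hcum_succ D0 /delta; ring.
have [dl0|dl_neq0] := eqVneq (delta ye y 0 t) 0.
  left; split=> [|j]; first by rewrite DS.
  by rewrite cumL_succ tied_H HS dl0 addr0 (delta0_eq0 tied dl0).
have dl_gt0 : 0 < delta ye y 0 t by rewrite lt_neqAle eq_sym dl_neq0 delta0_ge0.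
have d_gt1 : (1 < d)%N.
  rewrite ltn_neqAle d_gt0 andbT; apply/eqP => d1.
  by move: dl_neq0; rewrite delta0_single ?eqxx.
right; split; rewrite ?DS //.
have c_le j : Hcum t + mmix ye y 0 t <= cumL t.+1 j.
  by rewrite cumL_succ tied_H lerD2l mmix0_le.
have := potential_ge d_gt0 (eta_of_gt0 d_gt1 dl_gt0) c_le.
by rewrite eta_of_invK // HS; lra.
Qed.

(* Between two rounds with Delta > 0: telescope m_t, then trade the learning
   rate eta_t for the smaller eta_{t+1} at the price Delta_{t+1} - Delta_t. *)
Lemma regret_inv_succ_pos t : (forall j, 0 <= lo t j <= 1) -> 0 < Dcum t -> (1 < d)%N ->
  Hcum t <= potential (eta_of d (Dcum t)) (cumL t) + 2 * Dcum t -> regret_inv t.+1.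
Proof.
move=> l01 D_gt0 d_gt1 H_le.
have [dl_ge0 _ _] := delta_pos_bounds d_gt1 D_gt0 l01.
set dl := delta ye y (Dcum t) t in dl_ge0.
have DS_gt0 : 0 < Dcum t.+1 by rewrite Dcum_succ -/dl; lra.
have HS : Hcum t.+1 = Hcum t + mmix ye y (Dcum t) t + dl.
  by rewrite Hcum_succ /dl /delta; ring.
have eta_le : eta_of d (Dcum t.+1) <= eta_of d (Dcum t).
  by rewrite /eta_of ler_pM2l ?ln_gt0 ?ltr1n // lef_pV2 ?posrE // Dcum_succ -/dl; lra.
have := potential_shift_mono (cumL t.+1) d_gt0 (eta_of_gt0 d_gt1 DS_gt0) eta_le.
rewrite !eta_of_invK // Dcum_succ -/dl => mono.
right; split => //; rewrite Dcum_succ -/dl HS mmix_telescope ?lt0r_neq0 //; lra.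
Qed.

Lemma regret_inv_succ t : (forall j, 0 <= lo t j <= 1) -> regret_inv t -> regret_inv t.+1.
Proof.
move=> l01 [[D0 tied_H]|[D_gt0 d_gt1 H_le]].
  exact: regret_inv_succ_tied.
exact: regret_inv_succ_pos.
Qed.

(* Leaving a tie, Delta_{t+1} = delta_t lies in [0, 1]; otherwise the
   Bernstein bound on delta_t and eta_t Delta_t = ln d control the increment
   (Delta_t + delta_t)^2 - Delta_t^2. *)
Lemma gap_inv_succ t : (forall j, 0 <= lo t j <= 1) ->
  regret_inv t -> gap_inv t -> gap_inv t.+1.
Proof.
move=> l01 [[D0 tied_H]|[D_gt0 d_gt1 _]] gap.
  have tied j k : cumL t j = cumL t k by rewrite !tied_H.
  have lnd_ge0 : 0 <= ln (d%:R : R) by rewrite ln_ge0 // ler1n.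
  have := delta0_ge0 tied; have := delta0_le1 tied l01.
  move: gap; rewrite /gap_inv Vcum_succ Dcum_succ D0 expr0n /= mulr0 addr0 add0r.
  set dl := delta ye y 0 t => V_ge0 dl_le1 dl_ge0.
  have : 0 <= ln d%:R * vvar ye y t by rewrite mulr_ge0 ?vvar_ge0.
  have : 0 <= ln d%:R * dl by rewrite mulr_ge0.
  have : dl ^+ 2 <= dl by rewrite expr2 ler_piMr.
  lra.
have [dl_ge0 dl_le1 bern] := delta_pos_bounds d_gt1 D_gt0 l01.
move: gap; rewrite /gap_inv Vcum_succ Dcum_succ.
set dl := delta ye y (Dcum t) t in dl_ge0 dl_le1 bern *.
have cross : 2 * Dcum t * dl <= ln d%:R * vvar ye y t + 2/3 * ln d%:R * dl.
  rewrite -(eta_of_mulK D_gt0); have := ler_wpM2l (ltW D_gt0) bern; lra.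
have : dl ^+ 2 <= dl by rewrite expr2 ler_piMr.
have -> : (Dcum t + dl) ^+ 2 = Dcum t ^+ 2 + 2 * Dcum t * dl + dl ^+ 2 by ring.
lra.
Qed.

Lemma invariants T : (forall t j, (t < T)%N -> 0 <= lo t j <= 1) ->
  forall t, (t <= T)%N -> regret_inv t /\ gap_inv t.
Proof.
move=> l01; elim=> [|t IH] tT.
  split; first by left; split=> // j; rewrite /Hcum /Defs.cumL !big_ord0.
  by rewrite /gap_inv /Vcum big_ord0 expr0n /= !mulr0 addr0.
have [reg gap] := IH (ltnW tT); have l01t j : 0 <= lo t j <= 1 := l01 t j tT.
by split; [exact: regret_inv_succ | exact: gap_inv_succ].
Qed.

Lemma phat_sum1 t : regret_inv t -> \sum_i phat ye y t i = 1.
Proof.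
case=> [[D0 tied_H]|[D_gt0 _ _]]; last by rewrite /Defs.phat weights_sum1 // gt_eqF.
rewrite /Defs.phat D0 -[RHS]sum_uniform; apply: eq_bigr => i _.
by apply: weights_tied => j k; rewrite !tied_H.
Qed.

Lemma regret_le_twice_gap T i : regret_inv T -> Hcum T <= cumL T i + 2 * Dcum T.
Proof.
case=> [[-> tied_H]|[D_gt0 d_gt1 H_le]]; first by rewrite tied_H mulr0 addr0.
by have := potential_le (cumL T) i (eta_of_gt0 d_gt1 D_gt0); lra.
Qed.

Lemma adahedge_regret T i (eta : R) : (forall t j, (t < T)%N -> 0 <= lo t j <= 1) ->
  0 < eta ->
  \sum_(t < T) loss y t (yhat ye y t)
    <= cumL T i + (ln d%:R / eta + eta * Vcum T) + (4 / 3 * ln d%:R + 2).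
Proof.
move=> l01 eta_gt0; have inv := invariants l01.
have [reg gap] := inv T (leqnn T).
have -> : \sum_(t < T) loss y t (yhat ye y t) = Hcum T.
  apply: eq_bigr => t _; rewrite loss_yhat // phat_sum1 //.
  by case: (inv t (ltnW (ltn_ord t))).
have D_ge0 : 0 <= Dcum T by case: reg => [[-> _]|[/ltW]].
have lnd_ge0 : 0 <= ln (d%:R : R) by rewrite ln_ge0 // ler1n.
have B_ge0 : 0 <= 2/3 * ln (d%:R : R) + 1 by lra.
have := tuned_root_bound D_ge0 lnd_ge0 (Vcum_ge0 T) B_ge0 eta_gt0 gap.
by have := regret_le_twice_gap i reg; lra.
Qed.

End AdaHedge.

Theorem mainTheorem9 (R : realType) (d T : nat)
  (ye : nat -> 'I_d -> R) (y : nat -> R) (c : nat -> R) :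
  (0 < d)%N ->
  (forall t i, (t < T)%N -> -1 <= ye t i <= 1) ->
  (forall t, (t < T)%N -> y t = 1 \/ y t = -1) ->
  forall i : 'I_d,
    \sum_(t < T) ((1 - babst ye y t) * loss y t (ystar ye y t) + babst ye y t * c t)
    <= \sum_(t < T) loss y t (ye t i)
       + inf [set (ln d%:R / eta
                   + \sum_(t < T) ((1 - babst ye y t) * loss y t (ystar ye y t)
                                   + c t * babst ye y t + eta * vvar ye y t
                                   - loss y t (yhat ye y t)))
             | eta in [set eta : R | 0 < eta]]
       + 4 / 3 * ln d%:R + 2.
Proof.
move=> d_gt0 ye_in y_pm i.
have l01 t j : (t < T)%N -> 0 <= loss y t (ye t j) <= 1.
  by move=> tT; apply: loss_in01; [exact: ye_in | exact: y_pm].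
(* the learner's expected loss A appears on both sides and cancels *)
set A := \sum_(t < T) ((1 - babst ye y t) * loss y t (ystar ye y t) + babst ye y t * c t).
set E := [set _ | eta in _].
suff : A - cumL ye y T i - (4 / 3 * ln d%:R + 2) <= inf E by rewrite /Defs.cumL; lra.
apply: lb_le_inf; first by eexists; exists 1; [exact: ltr01 |].
move=> _ [eta eta_gt0 <-].
have -> : \sum_(t < T) ((1 - babst ye y t) * loss y t (ystar ye y t) + c t * babst ye y t
                        + eta * vvar ye y t - loss y t (yhat ye y t))
          = A + eta * Vcum ye y T - \sum_(t < T) loss y t (yhat ye y t).
  rewrite /A /Vcum mulr_sumr -big_split -sumrB /=.
  by apply: eq_bigr => t _; ring.
by have := adahedge_regret d_gt0 i l01 eta_gt0; lra.
Qed.
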